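(* In the quantum LOCAL model, the subgraph state construction problem can be solved in $2$ rounds: on any network $G=(V,E)$ where each node $u\in V$ receives a bit $c_u\in\{0,1\}$, there is a $2$-round quantum LOCAL algorithm at the end of which the graph state of the induced subgraph $G'=(V',E')$ of $G$ on $V'=\{v\in V: c_v=1\}$ is shared by the nodes of $V'$, each node $v\in V'$ holding the one-qubit register $\mathsf{Q}_v$ of that graph state.
   Context: Quantum LOCAL model: the network is an undirected unweighted graph; each node is a quantum processor with a distinct identifier, initially knowing only its incident edges and the number of nodes. Computation proceeds in synchronous rounds; in each round each node performs arbitrary local quantum operations and sends one quantum message (any number of qubits) together with classical information to each neighbour. Initially no entanglement or randomness is shared. Graph state of a graph $G'=(V',E')$: take one-qubit registers $\mathsf{Q}_u$, $u\in V'$, initialized to $\bigotimes_{u}|0\rangle_{\mathsf{Q}_u}$, apply the Hadamard gate $\mathrm{H}=\frac{1}{\sqrt2}\begin{pmatrix}1&1\\1&-1\end{pmatrix}$ to each register, then for each edge $\{u,v\}\in E'$ apply the controlled-$Z$ gate $\mathrm{CZ}=\mathrm{diag}(1,1,1,-1)$ to $(\mathsf{Q}_u,\mathsf{Q}_v)$. *)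

(* Qubit systems are indexed by finite label types; computational basis
   states of a system with labels S are the functions S -> bool; operators
   and density matrices are given by their matrix entries. *)
From HB Require Import structures.
From mathcomp Require Import all_boot all_order all_algebra.
From mathcomp Require Import algC.
Set Implicit Arguments. Unset Strict Implicit. Unset Printing Implicit Defensive.
Import Order.TTheory GRing.Theory Num.Theory.
Local Open Scope ring_scope.

Definition Basis (S : finType) := {ffun S -> bool}.
Definition Vec (S : finType) := Basis S -> algC.
Definition Op (S : finType) := Basis S -> Basis S -> algC.

Definition zero_basis (S : finType) : Basis S := [ffun _ => false].
Arguments zero_basis : clear implicits.

Definition op_mul (S : finType) (A B : Op S) : Op S :=
  fun x y => \sum_(z : Basis S) A x z * B z y.
Definition op_adj (S : finType) (A : Op S) : Op S := fun x y => (A y x)^*.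

(* a list of Kraus operators is a quantum channel (CPTP map) *)
Definition is_channel (S : finType) (ks : seq (Op S)) : Prop :=
  forall x y : Basis S,
    \sum_(K <- ks) op_mul (op_adj K) K x y = (x == y)%:R.

Definition apply_channel (S : finType) (ks : seq (Op S)) (rho : Op S) : Op S :=
  fun x y => \sum_(K <- ks) \sum_(z : Basis S) \sum_(w : Basis S)
               K x z * rho z w * (K y w)^*.

(* Lift of an operator acting on the qubits f(S) of a larger system L
   (tensored with the identity on the other qubits); f is injective. *)
Definition restrict (S L : finType) (f : S -> L) (x : Basis L) : Basis S :=
  [ffun s => x (f s)].
Definition lift_op (S L : finType) (f : S -> L) (A : Op S) : Op L :=
  fun x y => A (restrict f x) (restrict f y) *
             [forall l, (l \notin codom f) ==> (x l == y l)]%:R.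

(* Reduced state (partial trace of everything but the qubits f(T)),
   for an injective f : T -> L. *)
Definition glue (T L : finType) (f : T -> L) (a : Basis T) (z : Basis L)
  : Basis L :=
  [ffun l => if [pick t | f t == l] is Some t then a t else z l].
Definition reduced (T L : finType) (f : T -> L) (rho : Op L) : Op T :=
  fun a b => \sum_(z : Basis L | [forall t, z (f t) == false])
               rho (glue f a z) (glue f b z).

Definition density (S : finType) (psi : Vec S) : Op S :=
  fun x y => psi x * (psi y)^*.

Definition set_bit (S : finType) (x : Basis S) (q : S) (b : bool) : Basis S :=
  [ffun l => if l == q then b else x l].

(* one-qubit gate g (entries g out in) applied to qubit q *)
Definition apply1 (S : finType) (g : bool -> bool -> algC) (q : S)
  (psi : Vec S) : Vec S :=
  fun x => \sum_(b : bool) g (x q) b * psi (set_bit x q b).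

(* two-qubit gate g applied to qubits (q1, q2), q1 <> q2 *)
Definition apply2 (S : finType) (g : bool * bool -> bool * bool -> algC)
  (q1 q2 : S) (psi : Vec S) : Vec S :=
  fun x => \sum_(b1 : bool) \sum_(b2 : bool)
     g (x q1, x q2) (b1, b2) * psi (set_bit (set_bit x q1 b1) q2 b2).

Definition hadamard (o i : bool) : algC :=
  (sqrtC 2)^-1 * (if o && i then -1 else 1).
Definition cz (o i : bool * bool) : algC :=
  if o == i then (if o.1 && o.2 then -1 else 1) else 0.

Definition ket0 (S : finType) : Vec S := fun x => (x == zero_basis S)%:R.
Arguments ket0 : clear implicits.

(* the edges {u,v} of a simple graph (T, r), each listed once *)
Definition edge_list (T : finType) (r : rel T) : seq (T * T) :=
  [seq p <- enum {: T * T}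
     | r p.1 p.2 && (enum_rank p.1 < enum_rank p.2)%N].

Definition graph_state (T : finType) (r : rel T) : Vec T :=
  foldr (fun pq psi => apply2 cz pq.1 pq.2 psi)
        (foldr (fun q psi => apply1 hadamard q psi) (ket0 T) (enum T))
        (edge_list r).

(* What a node initially knows: number of nodes, its identifier, the
   identifiers of its neighbours (its incident edges, listed in increasing
   order of identifier), and its input bit. *)
Record view := View { v_n : nat; v_id : nat; v_nbrs : seq nat; v_c : bool }.

(* Local registers of a node with degree d, memory of m.+1 qubits and
   messages of k qubits:
     inl (inl i)      : memory qubit i  (memory qubit 0 is the output qubit Q)
     inl (inr (j, a)) : qubit a of the message received from neighbour j
     inr (j, a)       : qubit a of the message to be sent to neighbour j
   (neighbours numbered by their rank in v_nbrs). *)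
Definition LocalLab (m k d : nat) :=
  ('I_m.+1 + ('I_d * 'I_k) + ('I_d * 'I_k))%type.

(* Classical messages / classical side information are carried by qubits
   in computational basis states. *)
Record algorithm := Algorithm {
  memsize : nat -> nat;
  msgsize : nat -> nat;
  local_op : forall (s : nat) (w : view),
      seq (Op (LocalLab (memsize (v_n w)) (msgsize (v_n w)) (size (v_nbrs w))))
}.

Definition valid_algorithm (A : algorithm) : Prop :=
  forall s w, is_channel (local_op A s w).

Section Network.
Variables (A : algorithm) (R n : nat) (e : rel 'I_n) (id : 'I_n -> nat)
          (c : 'I_n -> bool).

Definition nbrs_sorted (u : 'I_n) : seq 'I_n :=
  sort (fun a b => (id a <= id b)%N) [seq v <- enum 'I_n | e u v].

Definition view_of (u : 'I_n) : view :=
  View n (id u) (map id (nbrs_sorted u)) (c u).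

(* Global qubit labels: memories (node, index) and message registers
   P[t](sender, receiver, index) for t = 0 .. R+1.  At step s (0 <= s <= R)
   every node acts on its memory, the messages P[s](., u) it received, and
   the (initially |0>) outgoing registers P[s+1](u, .), which are then
   delivered.  Steps 0..R-1 are the R communication rounds, step R is the
   final local computation (registers P[R+1] are never read, i.e. discarded). *)
Definition GlobalLab :=
  (('I_n * 'I_(memsize A n).+1) +
   ('I_R.+2 * 'I_n * 'I_n * 'I_(msgsize A n)))%type.

Definition embed (s : nat) (u : 'I_n)
  (l : LocalLab (memsize A (v_n (view_of u))) (msgsize A (v_n (view_of u)))
                (size (v_nbrs (view_of u)))) : GlobalLab :=
  match l with
  | inl (inl i) => inl (u, i)
  | inl (inr (j, a)) => inr (inord s, nth u (nbrs_sorted u) j, u, a)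
  | inr (j, a) => inr (inord s.+1, u, nth u (nbrs_sorted u) j, a)
  end.

Definition init_state : Op GlobalLab :=
  fun x y => ((x == zero_basis _) && (y == zero_basis _))%:R.

Definition do_step (s : nat) (rho : Op GlobalLab)
  : Op GlobalLab :=
  foldr (fun u r => apply_channel
            (map (lift_op (@embed s u)) (local_op A s (view_of u))) r)
        rho (enum 'I_n).

Definition final_state : Op GlobalLab :=
  foldl (fun rho s => do_step s rho) init_state (iota 0 R.+1).

Definition selected := {v : 'I_n | c v}.
Definition induced_rel : rel selected := fun a b => e (val a) (val b).

Definition out_qubit (v : selected) : GlobalLab := inl (val v, ord0).

Definition output_state : Op selected := reduced out_qubit final_state.

End Network.

(* Round 1: every selected node u puts its output qubit Q_u in |+> and copies
   it into one outgoing message qubit per neighbour, i.e. prepares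
   (|0>|0..0> + |1>|1..1>)/sqrt 2; unselected nodes send |0>.  Round 2: u
   multiplies by (-1)^(x_u x_v) for each received copy x_v coming from a
   neighbour v of smaller identifier, which is CZ exactly once on every edge of
   the induced subgraph (unselected nodes only send 0), and sends the copies
   back.  Final step: u XORs x_u into the returned copies of x_u, resetting all
   message qubits to |0>, so the output qubits are left in
   sum_x 2^(-|V'|/2) (-1)^(number of edges of G' inside x) |x>, the graph state.
   Formally, each intermediate global state is a superposition over output
   strings s of basis states whose message qubits are a classical function of s,
   and the two ways of counting edges (by identifiers, and in the edge list of
   the graph state) agree since both are half the number of ordered adjacent
   pairs. *)

From mathcomp Require Import all_boot all_order all_algebra.
From mathcomp Require Import algC.
From mathcomp Require Import ring zify.
From Stdlib Require Import FunctionalExtensionality.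
Set Implicit Arguments. Unset Strict Implicit. Unset Printing Implicit Defensive.
Import Order.TTheory GRing.Theory Num.Theory.

Section OrientedEdgeCount.
Variables (T : finType) (E : rel T) (k : T -> nat).
Hypotheses (E_sym : symmetric E) (E_irr : irreflexive E) (k_inj : injective k).

Lemma sum_rel_ltn_double :
  (\sum_p \sum_q (E p q && (k p < k q))) * 2 = \sum_p \sum_q E p q.
Proof.
have swap : \sum_p \sum_q (E p q && (k q < k p))
          = \sum_p \sum_q (E p q && (k p < k q)).
  by rewrite exchange_big; apply: eq_bigr => p _; apply: eq_bigr => q _; rewrite E_sym.
rewrite muln2 -addnn -{1}swap -big_split; apply: eq_bigr => p _.
rewrite -big_split; apply: eq_bigr => q _.
have [Epq|] := boolP (E p q); last by [].
have : k p != k q by apply: contraTneq Epq => /k_inj ->; rewrite E_irr.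
by case: ltngtP.
Qed.

End OrientedEdgeCount.

Local Open Scope ring_scope.

Section GraphStateAmplitude.
Variable T : finType.

Lemma set_bit_id (x : Basis T) q : set_bit x q (x q) = x.
Proof. by apply/ffunP => q'; rewrite ffunE; case: eqP => [->|]. Qed.

Lemma hadamard_layerE (l : seq T) (x : Basis T) : uniq l ->
  foldr (fun q psi => apply1 hadamard q psi) (ket0 T) l x
  = (sqrtC 2)^-1 ^+ size l * [forall q, (q \notin l) ==> ~~ x q]%:R.
Proof.
elim: l x => [|q l IH] x /=.
  move=> _; rewrite expr0 mul1r /ket0.
  suff -> : (x == zero_basis T) = [forall q, ~~ x q] by [].
  apply/eqP/forallP => [-> q|x0]; first by rewrite ffunE.
  by apply/ffunP => q; rewrite ffunE; apply/negbTE; exact: x0.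
case/andP => q_l l_uniq; rewrite /apply1 big_bool /= !IH //.
have -> : [forall q', (q' \notin l) ==> ~~ set_bit x q true q'] = false.
  by apply/negbTE/negP => /forallP/(_ q); rewrite q_l ffunE eqxx.
have -> : [forall q', (q' \notin l) ==> ~~ set_bit x q false q']
          = [forall q', (q' \notin q :: l) ==> ~~ x q'].
  apply: eq_forallb => q'; rewrite in_cons ffunE.
  by case: eqP => [->|_] /=; rewrite ?q_l ?implybT.
by rewrite /hadamard andbF mulr1 !mulr0 add0r exprS mulrA.
Qed.

Lemma cz_layerE (E : seq (T * T)) (psi : Vec T) x :
  foldr (fun pq psi => apply2 cz pq.1 pq.2 psi) psi E x
  = psi x * (-1) ^+ count (fun pq => x pq.1 && x pq.2) E.
Proof.
elim: E => [|[p q] E IH] /=; first by rewrite expr0 mulr1.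
rewrite /apply2 (bigD1 (x p)) //= [X in _ + X]big1 ?addr0; last first.
  move=> b1 /negbTE b1_x; apply: big1 => b2 _.
  by rewrite /cz /= xpair_eqE eq_sym b1_x mul0r.
rewrite (bigD1 (x q)) //= [X in _ + X]big1 ?addr0; last first.
  by move=> b2 /negbTE b2_x; rewrite /cz /= xpair_eqE eqxx eq_sym b2_x mul0r.
rewrite !set_bit_id IH /cz eqxx exprD.
by case: (x p && x q); rewrite ?expr1 ?expr0; ring.
Qed.

Lemma graph_stateE (r : rel T) x :
  graph_state r x
  = (sqrtC 2)^-1 ^+ #|T| * (-1) ^+ count (fun pq => x pq.1 && x pq.2) (edge_list r).
Proof.
rewrite /graph_state cz_layerE hadamard_layerE ?enum_uniq // -cardT.
have -> : [forall q, (q \notin enum T) ==> ~~ x q] by apply/forallP => q; rewrite mem_enum.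
by rewrite mulr1.
Qed.

End GraphStateAmplitude.

Section LocalChannels.
Variable S : finType.

Definition phase_perm (p : Basis S -> Basis S) (ph : Basis S -> algC) : Op S :=
  fun bo bi => ph bi * (bo == p bi)%:R.

Definition prepare (phi : Vec S) : seq (Op S) :=
  [seq (fun bo bi => phi bo * (bi == z)%:R) | z <- enum (Basis S)].

Lemma phase_perm_channel p ph :
  involutive p -> (forall a, ph a * (ph a)^* = 1) -> is_channel [:: phase_perm p ph].
Proof.
move=> pK ph_unit x y; rewrite big_seq1 /op_mul /op_adj /phase_perm.
rewrite (bigD1 (p x)) //= big1; last first.
  by move=> z /negbTE z_px; rewrite z_px mulr0 rmorph0 mul0r.
rewrite eqxx (can_eq pK) addr0 mulr1.
by case: eqP => [->|_]; rewrite ?mulr0 // mulr1 mulrC ph_unit.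
Qed.

Lemma prepare_channel (phi : Vec S) :
  \sum_b phi b * (phi b)^* = 1 -> is_channel (prepare phi).
Proof.
move=> phi_norm x y; rewrite /prepare big_map big_enum /=.
rewrite (bigD1 x) //= big1; last first.
  move=> z z_x; rewrite /op_mul big1 // => w _.
  by rewrite /op_adj eq_sym (negbTE z_x) mulr0 rmorph0 mul0r.
rewrite addr0 /op_mul /op_adj eqxx.
have [_|_] := eqVneq x y; last by rewrite big1 // => w _; rewrite !mulr0.
by rewrite -[RHS]phi_norm; apply: eq_bigr => w _; rewrite !mulr1 mulrC.
Qed.

End LocalChannels.

(* [branch key amp cfg] is the superposition of the basis states [cfg k] with
   amplitudes [amp k], provided [key (cfg k) = k]. *)
Definition branch (L : finType) (K : Type) (key : Basis L -> K) (amp : K -> algC)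
  (cfg : K -> Basis L) : Vec L :=
  fun x => amp (key x) * (x == cfg (key x))%:R.

Section LiftedOperators.
Variables (S L : finType) (f : S -> L).
Hypothesis f_inj : injective f.

Definition agree_off (x z : Basis L) := [forall l, (l \notin codom f) ==> (x l == z l)].

Lemma glue_image (a : Basis S) z t : glue f a z (f t) = a t.
Proof.
rewrite /glue ffunE; case: pickP => [t' /eqP/f_inj -> //|/(_ t)].
by rewrite eqxx.
Qed.

Lemma glue_off_image (a : Basis S) z l : l \notin codom f -> glue f a z l = z l.
Proof.
move=> l_f; rewrite /glue ffunE; case: pickP => [t /eqP ft_l|//].
by move: l_f; rewrite -ft_l codom_f.
Qed.

Lemma restrict_glue (a : Basis S) z : restrict f (glue f a z) = a.
Proof. by apply/ffunP => t; rewrite ffunE glue_image. Qed.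

Lemma glue_restrict (x z : Basis L) : agree_off x z -> glue f (restrict f z) x = z.
Proof.
move/forallP=> xz; apply/ffunP => l; have [/codomP[t ->]|l_f] := boolP (l \in codom f).
  by rewrite glue_image ffunE.
by rewrite glue_off_image //; apply/eqP; exact: implyP (xz l) l_f.
Qed.

Lemma agree_off_glue (a : Basis S) x : agree_off x (glue f a x).
Proof. by apply/forallP => l; apply/implyP => l_f; rewrite glue_off_image. Qed.

Lemma glue_eqE (a : Basis S) x C :
  (glue f a x == C) = (a == restrict f C) && agree_off x C.
Proof.
apply/eqP/andP => [<-|[/eqP -> /glue_restrict //]].
by rewrite restrict_glue eqxx agree_off_glue.
Qed.

Lemma agree_offC x z : agree_off x z = agree_off z x.
Proof. by apply: eq_forallb => l; rewrite eq_sym. Qed.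

Lemma eq_glueE (a : Basis S) x C :
  (x == glue f a C) = (restrict f x == a) && agree_off x C.
Proof. by rewrite eq_sym glue_eqE eq_sym agree_offC. Qed.

Lemma sum_agree_off (F : Basis L -> algC) x :
  \sum_z (agree_off x z)%:R * F z = \sum_a F (glue f a x).
Proof.
rewrite (bigID (agree_off x)) /= [X in _ + X]big1 ?addr0; last first.
  by move=> z /negbTE ->; rewrite mul0r.
rewrite (reindex_onto (glue f ^~ x) (restrict f)) /=; last first.
  by move=> z; apply: glue_restrict.
apply: eq_big => [a|a _]; last by rewrite agree_off_glue mul1r.
by rewrite agree_off_glue restrict_glue eqxx.
Qed.

Definition lift_vec (K : Op S) (psi : Vec L) : Vec L :=
  fun x => \sum_a K (restrict f x) a * psi (glue f a x).

Lemma lift_opE (K : Op S) (psi : Vec L) x :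
  \sum_z lift_op f K x z * psi z = lift_vec K psi x.
Proof.
have -> : lift_vec K psi x
    = \sum_a (fun z => K (restrict f x) (restrict f z) * psi z) (glue f a x).
  by apply: eq_bigr => a _; rewrite restrict_glue.
rewrite -(sum_agree_off (fun z => K (restrict f x) (restrict f z) * psi z)).
by apply: eq_bigr => z _; rewrite /lift_op mulrCA mulrA.
Qed.

Lemma apply_lifted_density (ks : seq (Op S)) (psi : Vec L) x y :
  apply_channel (map (lift_op f) ks) (density psi) x y
  = \sum_(K <- ks) lift_vec K psi x * (lift_vec K psi y)^*.
Proof.
rewrite /apply_channel big_map; apply: eq_bigr => K _.
rewrite -!lift_opE rmorph_sum mulr_suml; apply: eq_bigr => z _.
rewrite mulr_sumr; apply: eq_bigr => w _.
rewrite /density !rmorphM /= -!mulrA; congr (_ * (_ * _)).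
by rewrite [(psi w)^* * _]mulrC -mulrA.
Qed.

Lemma apply_lifted_phase_perm p ph psi : involutive p ->
  apply_channel (map (lift_op f) [:: phase_perm p ph]) (density psi)
  = density (fun x => ph (p (restrict f x)) * psi (glue f (p (restrict f x)) x)).
Proof.
move=> pK; suff lift_vecE x : lift_vec (phase_perm p ph) psi x
    = ph (p (restrict f x)) * psi (glue f (p (restrict f x)) x).
  apply: functional_extensionality => x; apply: functional_extensionality => y.
  by rewrite apply_lifted_density big_seq1 !lift_vecE.
rewrite /lift_vec /phase_perm (bigD1 (p (restrict f x))) //= big1 ?addr0.
  by rewrite pK eqxx mulr1.
move=> a a_x; case: eqP => [x_pa|_]; last by rewrite mulr0 mul0r.
by move: a_x; rewrite x_pa pK eqxx.
Qed.

Lemma apply_lifted_prepare phi z0 psi :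
  (forall z x, z != z0 -> psi (glue f z x) = 0) ->
  apply_channel (map (lift_op f) (prepare phi)) (density psi)
  = density (fun x => phi (restrict f x) * psi (glue f z0 x)).
Proof.
move=> psi_z0; have lift_vecE z x :
    lift_vec (fun bo bi => phi bo * (bi == z)%:R) psi x = phi (restrict f x) * psi (glue f z x).
  rewrite /lift_vec (bigD1 z) //= big1 ?addr0; first by rewrite eqxx mulr1.
  by move=> a /negbTE ->; rewrite mulr0 mul0r.
apply: functional_extensionality => x; apply: functional_extensionality => y.
rewrite apply_lifted_density /prepare big_map big_enum /= (bigD1 z0) //= big1 ?addr0.
  by rewrite !lift_vecE.
by move=> z z_z0; rewrite !lift_vecE psi_z0 // mulr0 mul0r.
Qed.

Lemma branch_phase_perm (K : Type) (key : Basis L -> K) amp cfg p ph :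
  involutive p -> (forall x, key (glue f (p (restrict f x)) x) = key x) ->
  (fun x => ph (p (restrict f x)) * branch key amp cfg (glue f (p (restrict f x)) x))
  = branch key (fun k => amp k * ph (restrict f (cfg k)))
               (fun k => glue f (p (restrict f (cfg k))) (cfg k)).
Proof.
move=> pK key_p; apply: functional_extensionality => x.
rewrite /branch key_p glue_eqE eq_glueE; set C := cfg (key x).
have -> : (p (restrict f x) == restrict f C) = (restrict f x == p (restrict f C)).
  by apply/eqP/eqP => [<-|->]; rewrite pK.
case: eqP => [->|_] /=; last by rewrite !mulr0.
by rewrite pK; ring.
Qed.

Lemma branch_prepare (K : Type) (key : Basis L -> K) amp cfg (z0 : Basis S)
    (prev : K -> K) (q0 : S) (bit : K -> bool) (w : bool -> algC) (g : bool -> Basis S) :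
  (forall x, key (glue f z0 x) = prev (key x)) ->
  (forall k, restrict f (cfg (prev k)) = z0) ->
  (forall x, bit (key x) = x (f q0)) -> (forall b, g b q0 = b) ->
  (fun x => branch (fun b => b q0) w g (restrict f x) * branch key amp cfg (glue f z0 x))
  = branch key (fun k => w (bit k) * amp (prev k)) (fun k => glue f (g (bit k)) (cfg (prev k))).
Proof.
move=> key_z0 cfg_z0 bitE gE; apply: functional_extensionality => x.
rewrite /branch key_z0 glue_eqE cfg_z0 eqxx /= eq_glueE ffunE -bitE.
case: eqP => _ /=; last by rewrite mulr0 !mul0r mulr0.
by rewrite mulr1 mulrA.
Qed.

Lemma branch_glue_eq0 (K : Type) (key : Basis L -> K) amp cfg (z0 : Basis S) :
  (forall k, amp k != 0 -> restrict f (cfg k) = z0) ->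
  forall z x, z != z0 -> branch key amp cfg (glue f z x) = 0.
Proof.
move=> cfg_z0 z x z_z0; rewrite /branch.
have [->|amp_k] := eqVneq (amp (key (glue f z x))) 0; first by rewrite mul0r.
case: eqP => [glue_cfg|_]; last by rewrite mulr0.
by move: z_z0; rewrite -(cfg_z0 _ amp_k) -glue_cfg restrict_glue eqxx.
Qed.

End LiftedOperators.

Definition Reg d := LocalLab 0 1 d.
Definition reg_q d : Reg d := inl (inl ord0).
Definition reg_in d (j : 'I_d) : Reg d := inl (inr (j, ord0)).
Arguments reg_q : clear implicits.

Definition cat_basis d (b : bool) : Basis (Reg d) :=
  [ffun l => match l with inl (inl _) => b | inl (inr _) => false | inr _ => b end].
Definition cat_amp (c b : bool) : algC := if c then (sqrtC 2)^-1 else (~~ b)%:R.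
Definition cat_state d (c : bool) : Vec (Reg d) :=
  branch (fun r => r (reg_q d)) (cat_amp c) (cat_basis d).
Arguments cat_basis : clear implicits.
Arguments cat_state : clear implicits.

Definition swap_msgs d (b : Basis (Reg d)) : Basis (Reg d) :=
  [ffun l : Reg d => match l with
     | inl (inl i) => b (inl (inl i))
     | inl (inr ja) => b (inr ja)
     | inr ja => b (inl (inr ja)) end].
Definition edge_phase (w : view) (b : Basis (Reg (size (v_nbrs w)))) : algC :=
  (-1) ^+ (b (reg_q _) *
           \sum_(j < size (v_nbrs w) | (nth 0 (v_nbrs w) j < v_id w)%N) b (reg_in j))%N.
Arguments edge_phase : clear implicits.

Definition uncopy d (b : Basis (Reg d)) : Basis (Reg d) :=
  [ffun l : Reg d => match l with
     | inl (inl i) => b (inl (inl i))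
     | inl (inr ja) => b (inl (inr ja)) (+) b (reg_q d)
     | inr ja => b (inr ja) end].

(* [memsize] 0 means a single memory qubit, the output qubit. *)
Definition subgraph_state_alg : algorithm :=
  @Algorithm (fun _ => 0%N) (fun _ => 1%N)
   (fun s w => match s with
     | 0 => prepare (cat_state (size (v_nbrs w)) (v_c w))
     | 1 => [:: phase_perm (@swap_msgs _) (edge_phase w)]
     | _ => [:: phase_perm (@uncopy _) (fun _ => 1)] end).

Lemma swap_msgsK d : involutive (@swap_msgs d).
Proof. by move=> b; apply/ffunP => [[[i|ja]|ja]]; rewrite !ffunE. Qed.

Lemma uncopyK d : involutive (@uncopy d).
Proof. by move=> b; apply/ffunP => [[[i|ja]|ja]]; rewrite /reg_q !ffunE ?addbK. Qed.

Lemma cat_basis_q d b : cat_basis d b (reg_q d) = b.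
Proof. by rewrite ffunE. Qed.

Lemma sqrtC2_inv_conj : ((sqrtC 2)^-1)^* = (sqrtC 2)^-1 :> algC.
Proof. by apply: geC0_conj; rewrite invr_ge0 sqrtC_ge0 ler0n. Qed.

Lemma sqrtC2_inv_sqr : (sqrtC 2)^-1 * (sqrtC 2)^-1 = 2^-1 :> algC.
Proof. by rewrite -invrM ?unitfE ?sqrtC_eq0 ?pnatr_eq0 // -expr2 sqrtCK. Qed.

Lemma sign_norm (k : nat) : (-1) ^+ k * ((-1) ^+ k)^* = 1 :> algC.
Proof. by rewrite rmorphXn /= rmorphN1 -exprMn mulrNN mulr1 expr1n. Qed.

Lemma cat_stateE d c b :
  cat_state d c b = cat_amp c (b (reg_q d)) * (b == cat_basis d (b (reg_q d)))%:R.
Proof. by []. Qed.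

Lemma cat_state_norm d c : \sum_b cat_state d c b * (cat_state d c b)^* = 1.
Proof.
have cat_basis_neq : cat_basis d true != cat_basis d false.
  by apply/eqP => /(congr1 (fun b : Basis (Reg d) => b (reg_q d))); rewrite !cat_basis_q.
rewrite (bigD1 (cat_basis d false)) //= (bigD1 (cat_basis d true)) //= big1; last first.
  move=> b /andP[b_false b_true]; rewrite cat_stateE.
  case: eqP => [b_cat|_]; last by rewrite mulr0 mul0r.
  by move: b_false b_true; rewrite b_cat; case: (b (reg_q d)); rewrite eqxx.
rewrite !cat_stateE !cat_basis_q !eqxx /cat_amp addr0 (_ : true%:R = 1 :> algC) //.
case: c; last by rewrite /= !mulr1 mul0r rmorph1 mulr1 addr0.
by rewrite !mulr1 sqrtC2_inv_conj sqrtC2_inv_sqr; field.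
Qed.

Lemma subgraph_state_alg_valid : valid_algorithm subgraph_state_alg.
Proof.
move=> [|[|s]] w /=.
- exact/prepare_channel/cat_state_norm.
- by apply: phase_perm_channel => [|a]; [exact: swap_msgsK | exact: sign_norm].
- by apply: phase_perm_channel => [|a]; [exact: uncopyK | rewrite rmorph1 mulr1].
Qed.

Section Network.
Variables (n : nat) (e : rel 'I_n) (id : 'I_n -> nat) (c : 'I_n -> bool).
Hypotheses (e_sym : symmetric e) (e_irr : irreflexive e) (id_inj : injective id).

Local Notation alg := subgraph_state_alg.
Local Notation Global := (GlobalLab alg 2 n).
Local Notation nbrs := (nbrs_sorted e id).
Local Notation deg u := (size (v_nbrs (view_of e id c u))).

Definition nbr u (j : 'I_(deg u)) : 'I_n := nth u (nbrs u) j.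
Definition emb s u : Reg (deg u) -> Global := @embed alg 2 n e id c s u.
Arguments nbr : clear implicits.
Arguments emb : clear implicits.

Lemma deg_nbrs u : deg u = size (nbrs u).
Proof. by rewrite /= size_map. Qed.

Lemma mem_nbrs u v : (v \in nbrs u) = e u v.
Proof. by rewrite mem_sort mem_filter mem_enum andbT. Qed.

Lemma uniq_nbrs u : uniq (nbrs u).
Proof. by rewrite sort_uniq filter_uniq // enum_uniq. Qed.

Lemma edge_nbr u j : e u (nbr u j).
Proof. by rewrite -mem_nbrs mem_nth // -deg_nbrs. Qed.

Lemma nbr_inj u : injective (nbr u).
Proof.
move=> j j' /eqP; rewrite /nbr nth_uniq ?uniq_nbrs -?deg_nbrs //.
by move/eqP/val_inj.
Qed.

Lemma nbr_surj u v : e u v -> exists j, nbr u j = v.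
Proof.
rewrite -mem_nbrs => v_u; have j_lt : (index v (nbrs u) < deg u)%N by rewrite deg_nbrs index_mem.
by exists (Ordinal j_lt); rewrite /nbr nth_index.
Qed.

Lemma nth_view_nbrs u (j : 'I_(deg u)) :
  nth 0%N (v_nbrs (view_of e id c u)) j = id (nbr u j).
Proof. by rewrite /= (nth_map u) // -deg_nbrs. Qed.

Lemma emb_inj s u : (s <= 2)%N -> injective (emb s u).
Proof.
move=> s_le [[i|[j a]]|[j a]] [[i'|[j' a']]|[j' a']] //=.
- by case=> ->.
- by case=> /nbr_inj -> ->.
- by case=> /(congr1 (@nat_of_ord _)); rewrite !inordK //; lia.
- by case=> /(congr1 (@nat_of_ord _)); rewrite !inordK //; lia.
- by case=> /nbr_inj -> ->.
Qed.

Definition local_at s u (l : Global) : bool :=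
  match l with
  | inl (w, _) => w == u
  | inr (t, x, y, _) => [&& t == s :> nat, y == u & e u x]
                        || [&& t == s.+1 :> nat, x == u & e u y]
  end.

Lemma codom_emb s u l : (s <= 2)%N -> (l \in codom (emb s u)) = local_at s u l.
Proof.
move=> s_le; apply/idP/idP.
  case/codomP => [[[i|[j a]]|[j a]] ->] /=; rewrite ?inordK ?eqxx ?edge_nbr ?orbT //; lia.
case: l => [[w i] /= /eqP ->|[[[t x] y] a] /=]; first by apply/codomP; exists (inl (inl i)).
case/orP => /and3P[/eqP t_s /eqP -> /nbr_surj[j <-]].
  apply/codomP; exists (inl (inr (j, a))); congr (inr (_, _, _, _)).
  by apply: ord_inj; rewrite inordK -t_s.
apply/codomP; exists (inr (j, a)); congr (inr (_, _, _, _)).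
by apply: ord_inj; rewrite inordK -t_s.
Qed.

Lemma glue_emb s u (a : Basis (Reg (deg u))) (C C' : Basis Global) : (s <= 2)%N ->
  (forall l, ~~ local_at s u l -> C l = C' l) -> (forall r, a r = C' (emb s u r)) ->
  glue (emb s u) a C = C'.
Proof.
move=> s_le C_out a_in; apply/ffunP => l; have [/codomP[r ->]|] := boolP (l \in codom (emb s u)).
  by rewrite glue_image ?a_in //; exact: emb_inj.
by move=> l_u; rewrite glue_off_image ?C_out -?codom_emb.
Qed.

Definition qbits (x : Basis Global) : Basis 'I_n := [ffun u => x (inl (u, ord0))].

Definition config (s : Basis 'I_n) (B : 'I_4 -> 'I_n -> 'I_n -> bool) : Basis Global :=
  [ffun l => match l with inl (w, _) => s w | inr (t, x, y, _) => B t x y end].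

Lemma qbits_glue s u a x : (s <= 2)%N ->
  qbits (glue (emb s u) a x) = set_bit (qbits x) u (a (reg_q _)).
Proof.
move=> s_le; apply/ffunP => w; rewrite [LHS]ffunE [RHS]ffunE.
case: eqP => [->|w_u]; first exact: (glue_image (@emb_inj s u s_le) a x (reg_q _)).
rewrite glue_off_image ?ffunE // codom_emb //=; exact/eqP.
Qed.

Lemma qbits_config s B : qbits (config s B) = s.
Proof. by apply/ffunP => w; rewrite !ffunE. Qed.

Definition net_state (amp : Basis 'I_n -> algC)
    (B : Basis 'I_n -> 'I_4 -> 'I_n -> 'I_n -> bool) : Op Global :=
  density (branch qbits amp (fun s => config s (B s))).

Definition node_step s u (rho : Op Global) : Op Global :=
  apply_channel (map (lift_op (emb s u)) (local_op alg s (view_of e id c u))) rho.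

Lemma do_step_invariant s (P : seq 'I_n -> Op Global) :
  (forall u l, u \notin l -> node_step s u (P l) = P (u :: l)) ->
  do_step e id c s (P [::]) = P (enum 'I_n).
Proof.
move=> P_cons; change (foldr (node_step s) (P [::]) (enum 'I_n) = P (enum 'I_n)).
elim: (enum 'I_n) (enum_uniq 'I_n) => [//|u l IH] /= /andP[u_l l_uniq].
by rewrite IH // P_cons.
Qed.

(* The message qubits P[t](x, y) for the output string [s], once the nodes of
   [l] have performed step 0, 1 or 2 respectively (and all nodes the earlier
   steps). *)
Definition sent (l : seq 'I_n) (s : Basis 'I_n) (t : 'I_4) x y :=
  [&& t == 1 :> nat, e x y, s x & x \in l].
Definition amp_cat (l : seq 'I_n) (s : Basis 'I_n) : algC :=
  (\prod_(v <- l) cat_amp (c v) (s v)) * [forall v, (v \notin l) ==> ~~ s v]%:R.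

Lemma init_stateE :
  @init_state alg 2 n = net_state (amp_cat [::]) (sent [::]).
Proof.
have psi0E x : branch qbits (amp_cat [::]) (fun s => config s (sent [::] s)) x
             = (x == zero_basis Global)%:R.
  rewrite /branch /amp_cat big_nil mul1r -natrM mulnb.
  apply: (congr1 (fun b : bool => b%:R)); apply/andP/eqP => [[/forallP x0 /eqP ->]|->].
    apply/ffunP => [[[w i]|[[[t y] z] a]]]; rewrite !ffunE /= /sent ?andbF //.
    by apply/negbTE; move: (x0 w); rewrite ffunE.
  split; first by apply/forallP => v; rewrite !ffunE.
  by apply/eqP/ffunP => [[[w i]|[[[t y] z] a]]]; rewrite !ffunE /= /sent ?andbF.
apply: functional_extensionality => x; apply: functional_extensionality => y.
by rewrite /init_state /net_state /density !psi0E rmorph_nat -natrM mulnb.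
Qed.

Lemma amp_cat_support l (s : Basis 'I_n) u : u \notin l -> amp_cat l s != 0 -> s u = false.
Proof.
move=> u_l; rewrite /amp_cat; case: forallP => [/(_ u)/implyP/(_ u_l)/negbTE //|_].
by rewrite mulr0 eqxx.
Qed.

Lemma amp_cat_cons l (s : Basis 'I_n) u : u \notin l ->
  amp_cat (u :: l) s = cat_amp (c u) (s u) * amp_cat l (set_bit s u false).
Proof.
move=> u_l; rewrite /amp_cat big_cons -mulrA; congr (_ * (_ * _)).
  apply: eq_big_seq => v v_l; rewrite ffunE; case: eqP => // v_u.
  by move: u_l; rewrite -v_u v_l.
suff -> : [forall v, (v \notin l) ==> ~~ set_bit s u false v]
        = [forall v, (v \notin u :: l) ==> ~~ s v] by [].
apply: eq_forallb => v; rewrite in_cons ffunE.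
by case: eqP => [->|_] /=; rewrite ?implybT.
Qed.

Lemma restrict_sent l (s : Basis 'I_n) u : s u = false ->
  restrict (emb 0 u) (config s (sent l s)) = zero_basis _.
Proof.
by move=> su; apply/ffunP => [[[i|[j a]]|[j a]]]; rewrite !ffunE /= /sent ?inordK ?su ?andbF.
Qed.

Lemma glue_sent l (s : Basis 'I_n) u : u \notin l ->
  glue (emb 0 u) (cat_basis _ (s u)) (config (set_bit s u false) (sent l (set_bit s u false)))
  = config s (sent (u :: l) s).
Proof.
move=> u_l; apply: glue_emb => //.
  move=> [[w i]|[[[t x] y] a]] /= l_u; rewrite !ffunE /= /sent; first by rewrite (negbTE l_u).
  rewrite in_cons ffunE; case: (x =P u) l_u => [->|_] l_u //=.
  move: l_u; rewrite e_irr !andbF /=.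
  by case: (t == 1 :> nat); case: (e u y).
move=> [[i|[j a]]|[j a]]; rewrite !ffunE //= /sent inordK //.
by rewrite edge_nbr in_cons eqxx !andbT.
Qed.

Lemma node_step_sent u l : u \notin l ->
  node_step 0 u (net_state (amp_cat l) (sent l))
  = net_state (amp_cat (u :: l)) (sent (u :: l)).
Proof.
move=> u_l; have emb_u := @emb_inj 0 u isT.
rewrite /node_step /net_state /= (apply_lifted_prepare emb_u _ (z0 := zero_basis _)); last first.
  by apply: branch_glue_eq0 => // s /(amp_cat_support u_l); apply: restrict_sent.
rewrite (branch_prepare emb_u _ (prev := fun s => set_bit s u false) (bit := fun s => s u)).
- congr (density (branch _ _ _)); apply: functional_extensionality => s.
    by rewrite amp_cat_cons.
  by rewrite glue_sent.
- by move=> x; rewrite qbits_glue // ffunE.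
- by move=> s; apply: restrict_sent; rewrite ffunE eqxx.
- by move=> x; rewrite ffunE.
- exact: cat_basis_q.
Qed.

Lemma round1E :
  do_step e id c 0 (@init_state alg 2 n)
  = net_state (amp_cat (enum 'I_n)) (sent (enum 'I_n)).
Proof.
rewrite init_stateE.
exact: (do_step_invariant (P := fun l => net_state (amp_cat l) (sent l))
          node_step_sent).
Qed.

Lemma qbits_glue_id s u (a : Basis (Reg (deg u))) x : (s <= 2)%N -> a (reg_q _) = qbits x u ->
  qbits (glue (emb s u) a x) = qbits x.
Proof. by move=> s_le a_q; rewrite qbits_glue // a_q set_bit_id. Qed.

Lemma node_step_phase_perm s u p ph amp cfg : (s <= 2)%N ->
  local_op alg s (view_of e id c u) = [:: phase_perm p ph] -> involutive p ->
  (forall b, p b (reg_q _) = b (reg_q _)) ->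
  node_step s u (density (branch qbits amp cfg))
  = density (branch qbits (fun k => amp k * ph (restrict (emb s u) (cfg k)))
                          (fun k => glue (emb s u) (p (restrict (emb s u) (cfg k))) (cfg k))).
Proof.
move=> s_le op_s pK p_q; have emb_u := @emb_inj s u s_le.
rewrite /node_step op_s (apply_lifted_phase_perm emb_u _ _ pK) (branch_phase_perm emb_u) //.
by move=> x; apply: qbits_glue_id; rewrite // p_q !ffunE.
Qed.

Definition swapped (l : seq 'I_n) (s : Basis 'I_n) (t : 'I_4) x y :=
  [&& t == 1 :> nat, e x y, s x & y \notin l] || [&& t == 2 :> nat, e x y, s y & x \in l].
Definition lower_count u (s : Basis 'I_n) : nat :=
  \sum_(j < deg u | (id (nbr u j) < id u)%N) s (nbr u j).
Definition amp_phase (l : seq 'I_n) (s : Basis 'I_n) : algC :=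
  amp_cat (enum 'I_n) s * \prod_(v <- l) (-1) ^+ (s v * lower_count v s).

Lemma sent_swapped : sent (enum 'I_n) = swapped [::].
Proof.
do 4 apply: functional_extensionality => ?.
by rewrite /sent /swapped mem_enum !in_nil inE /= !andbF orbF.
Qed.

Lemma edge_phase_swapped l (s : Basis 'I_n) u : u \notin l ->
  edge_phase (view_of e id c u) (restrict (emb 1 u) (config s (swapped l s)))
  = (-1) ^+ (s u * lower_count u s).
Proof.
move=> u_l; rewrite /edge_phase /lower_count !ffunE /=; congr (_ ^+ (_ * _)).
apply: eq_big => j; first by rewrite nth_view_nbrs.
by rewrite !ffunE /= /swapped inordK // e_sym edge_nbr (negbTE u_l) andbT orbF.
Qed.

Lemma glue_swapped l (s : Basis 'I_n) u : u \notin l ->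
  glue (emb 1 u) (swap_msgs (restrict (emb 1 u) (config s (swapped l s))))
       (config s (swapped l s))
  = config s (swapped (u :: l) s).
Proof.
move=> u_l; apply: glue_emb => //.
  move=> [[w i]|[[[t x] y] a]] /= l_u; rewrite !ffunE //= /swapped !in_cons.
  move: l_u; case: (y =P u) => [->|_]; case: (x =P u) => [->|_] /=.
  - by rewrite e_irr !andbF.
  - rewrite (e_sym x u) (negbTE u_l).
    by case: (t == 1 :> nat); case: (t == 2 :> nat); case: (e u x); rewrite ?andbF ?andbT.
  - by case: (t == 1 :> nat); case: (t == 2 :> nat); case: (e u y); rewrite ?andbF ?andbT.
  - by [].
move=> [[i|[j a]]|[j a]]; rewrite !ffunE //= /swapped !inordK // !in_cons eqxx (negbTE u_l).
  by rewrite /= !andbF.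
by rewrite (e_sym _ u) edge_nbr /= andbT orbF.
Qed.

Lemma node_step_swapped u l : u \notin l ->
  node_step 1 u (net_state (amp_phase l) (swapped l))
  = net_state (amp_phase (u :: l)) (swapped (u :: l)).
Proof.
move=> u_l; rewrite /net_state (@node_step_phase_perm 1 u (@swap_msgs _) (edge_phase _)) //;
  [|exact: swap_msgsK|by move=> b; rewrite ffunE].
congr (density (branch _ _ _)); apply: functional_extensionality => s.
  by rewrite edge_phase_swapped // /amp_phase big_cons mulrAC -mulrA.
exact: glue_swapped.
Qed.

Lemma round2E :
  do_step e id c 1 (net_state (amp_cat (enum 'I_n)) (sent (enum 'I_n)))
  = net_state (amp_phase (enum 'I_n)) (swapped (enum 'I_n)).
Proof.
have -> : amp_cat (enum 'I_n) = amp_phase [::].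
  by apply: functional_extensionality => s; rewrite /amp_phase big_nil mulr1.
rewrite sent_swapped.
exact: (do_step_invariant (P := fun l => net_state (amp_phase l) (swapped l)) node_step_swapped).
Qed.

Definition returned (l : seq 'I_n) (s : Basis 'I_n) (t : 'I_4) x y :=
  [&& t == 2 :> nat, e x y, s y & y \notin l].

Lemma swapped_returned : swapped (enum 'I_n) = returned [::].
Proof.
do 4 apply: functional_extensionality => ?.
by rewrite /swapped /returned !mem_enum !in_nil !inE /= !andbF !andbT.
Qed.

Lemma glue_returned l (s : Basis 'I_n) u : u \notin l ->
  glue (emb 2 u) (uncopy (restrict (emb 2 u) (config s (returned l s))))
       (config s (returned l s))
  = config s (returned (u :: l) s).
Proof.
move=> u_l; apply: glue_emb => //.
  move=> [[w i]|[[[t x] y] a]] /= l_u; rewrite !ffunE //= /returned !in_cons.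
  move: l_u; case: (y =P u) => [->|_] //=.
  rewrite (e_sym x u) (negbTE u_l).
  by case: (t == 2 :> nat); case: (e u x); rewrite ?andbF ?andbT.
move=> [[i|[j a]]|[j a]]; rewrite !ffunE //= /returned !inordK // !in_cons eqxx (negbTE u_l).
by rewrite (e_sym _ u) edge_nbr /=; case: (s u).
Qed.

Lemma node_step_returned amp u l : u \notin l ->
  node_step 2 u (net_state amp (returned l)) = net_state amp (returned (u :: l)).
Proof.
move=> u_l; rewrite /net_state (@node_step_phase_perm 2 u (@uncopy _) (fun _ => 1)) //;
  [|exact: uncopyK|by move=> b; rewrite ffunE].
congr (density (branch _ _ _)); apply: functional_extensionality => s.
  exact: mulr1.
exact: glue_returned.
Qed.

Definition amp_final := amp_phase (enum 'I_n).

Lemma final_stateE :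
  @final_state alg 2 n e id c = net_state amp_final (fun _ _ _ _ => false).
Proof.
rewrite /final_state /= round1E round2E swapped_returned -/amp_final.
have -> : (fun _ _ _ _ => false) = returned (enum 'I_n).
  do 4 apply: functional_extensionality => ?.
  by rewrite /returned mem_enum inE /= !andbF.
exact: (do_step_invariant (P := fun l => net_state amp_final (returned l)) (node_step_returned _)).
Qed.

Local Notation out_q := (@out_qubit alg 2 n c).

Definition extend (a : Basis (selected c)) : Basis 'I_n :=
  [ffun v => if (insub v : option (selected c)) is Some p then a p else false].

Lemma extend_val a p : extend a (val p) = a p.
Proof. by rewrite ffunE valK. Qed.

Lemma extend_out a w : ~~ c w -> extend a w = false.
Proof. by move=> cw; rewrite ffunE insubF //; apply: negbTE. Qed.

Lemma out_qubit_codom w i : (inl (w, i) : Global) \in codom out_q -> c w.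
Proof. by case/codomP => p [-> _]; exact: valP. Qed.

Lemma msg_notin_codom l : (inr l : Global) \notin codom out_q.
Proof. by apply/codomP => [[]]. Qed.

Lemma amp_final_support s w : amp_final s != 0 -> s w -> c w.
Proof.
rewrite /amp_final /amp_phase /amp_cat (bigD1_seq w) ?mem_enum ?enum_uniq //=.
by case: (c w) => //; rewrite /cat_amp => + sw; rewrite sw !mul0r eqxx.
Qed.

Lemma glue_out_zero a :
  glue out_q a (zero_basis Global) = config (extend a) (fun _ _ _ => false).
Proof.
apply/ffunP => [[[w i]|[[[t x] y] k]]]; rewrite [RHS]ffunE /=; last first.
  by rewrite glue_off_image ?msg_notin_codom ?ffunE.
rewrite (ord1 i) ffunE; case: pickP => [p /eqP [<-]|p_w]; first by rewrite extend_val.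
by rewrite ffunE extend_out //; apply/negP => cw; move: (p_w (exist _ w cw)); rewrite eqxx.
Qed.

Lemma final_amp_glue_eq0 a (z : Basis Global) :
  [forall t, z (out_q t) == false] -> z != zero_basis Global ->
  branch qbits amp_final (fun s => config s (fun _ _ _ => false)) (glue out_q a z) = 0.
Proof.
move=> /forallP z_out z_ne0; rewrite /branch; set s := qbits _.
have [->|amp_s] := eqVneq (amp_final s) 0; first by rewrite mul0r.
case: eqP => [glue_cfg|_]; last by rewrite mulr0.
case/eqP: z_ne0; apply/ffunP => [[[w i]|l]]; rewrite [RHS]ffunE.
  rewrite (ord1 i); have [cw|cw] := boolP (c w); first exact: (eqP (z_out (exist _ w cw))).
  have w_out : (inl (w, ord0) : Global) \notin codom out_q by apply: contra cw; apply: out_qubit_codom.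
  rewrite -(glue_off_image a z w_out) glue_cfg ffunE.
  by apply/negbTE; apply: contra cw; apply: amp_final_support.
rewrite -(glue_off_image a z (msg_notin_codom l)) glue_cfg ffunE.
by case: l => [[[t x] y] k].
Qed.

Lemma output_stateE x y :
  output_state alg 2 e id x y = density (fun a => amp_final (extend a)) x y.
Proof.
rewrite /output_state /reduced final_stateE /net_state.
rewrite (bigD1 (zero_basis Global)) /=; last by apply/forallP => t; rewrite ffunE.
rewrite big1 ?addr0 => [|z /andP[z_out z_ne0]]; last first.
  by rewrite /density final_amp_glue_eq0 // mul0r.
by rewrite /density /branch !glue_out_zero !qbits_config !eqxx !mulr1n !mulr1.
Qed.

Lemma lower_countE v s : lower_count v s = (\sum_(w | e v w && (id w < id v)%N) s w)%N.
Proof.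
rewrite /lower_count /nbr -(big_mkord (fun j => id (nth v (nbrs v) j) < id v)%N
  (fun j => nat_of_bool (s (nth v (nbrs v) j)))).
rewrite deg_nbrs -(big_nth v (fun w => id w < id v)%N (fun w => nat_of_bool (s w))).
rewrite (perm_big [seq w <- enum 'I_n | e v w]); last by rewrite perm_sort.
by rewrite big_filter_cond big_enum_cond.
Qed.

Lemma sum_selected (F : 'I_n -> nat) : (forall v, ~~ c v -> F v = 0%N) ->
  (\sum_v F v = \sum_(p : selected c) F (val p))%N.
Proof.
move=> F_out; rewrite (bigID c) /= [X in (_ + X)%N]big1 ?addn0; last by move=> v /F_out.
exact: big_sub.
Qed.

Lemma phase_exponentE a :
  (\sum_(v <- enum 'I_n) extend a v * lower_count v (extend a))%N
  = count (fun pq => a pq.1 && a pq.2) (edge_list (@induced_rel n e c)).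
Proof.
set X := extend a; set E' := fun v w => [&& e v w, X v & X w].
have E'_sym : symmetric E' by move=> v w; rewrite /E' e_sym (andbC (X v)).
have E'_irr : irreflexive E' by move=> v; rewrite /E' e_irr.
set F := fun p q : selected c => [&& @induced_rel n e c p q, a p & a q].
have F_sym : symmetric F by move=> p q; rewrite /F /induced_rel e_sym (andbC (a p)).
have F_irr : irreflexive F by move=> p; rewrite /F /induced_rel e_irr.
have rank_inj : injective (fun p : selected c => nat_of_ord (enum_rank p)).
  by move=> p q /val_inj/enum_rank_inj.
have lhsE : (\sum_(v <- enum 'I_n) X v * lower_count v X
             = \sum_w \sum_v (E' w v && (id w < id v)))%N.
  rewrite big_enum exchange_big /=; apply: eq_bigr => v _.
  rewrite lower_countE big_distrr /= big_mkcond /=; apply: eq_bigr => w _.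
  by rewrite /E' (e_sym w v); case: (X v); case: (X w); case: (e v w); case: (id w < id v)%N.
have rhsE : count (fun pq => a pq.1 && a pq.2) (edge_list (@induced_rel n e c))
            = (\sum_p \sum_q (F p q && (enum_rank p < enum_rank q)))%N.
  rewrite /edge_list count_filter -sum1_count big_mkcond big_enum /= pair_bigA /=.
  by apply: eq_bigr => [[p q]] _ /=; rewrite /F; case: (a p); case: (a q); case: induced_rel.
have E'F : (\sum_v \sum_w E' v w = \sum_p \sum_q F p q)%N.
  rewrite (@sum_selected (fun v => \sum_w E' v w)%N) => [|v cv]; last first.
    by apply: big1 => w _; rewrite /E' /X extend_out // andbF.
  apply: eq_bigr => p _; rewrite (@sum_selected (fun w => nat_of_bool (E' (val p) w))) => [|w cw].
    by apply: eq_bigr => q _; rewrite /E' /F /X !extend_val.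
  by rewrite /E' /X (extend_out _ cw) !andbF.
apply/eqP; rewrite -(eqn_pmul2r (_ : 0 < 2)%N) // lhsE rhsE.
rewrite (sum_rel_ltn_double E'_sym E'_irr id_inj).
by rewrite (sum_rel_ltn_double F_sym F_irr rank_inj) E'F.
Qed.

Lemma amp_final_extend a : amp_final (extend a) = graph_state (@induced_rel n e c) a.
Proof.
rewrite graph_stateE /amp_final /amp_phase /amp_cat.
have -> : \prod_(v <- enum 'I_n) cat_amp (c v) (extend a v) = (sqrtC 2)^-1 ^+ #|{: selected c}|.
  rewrite big_enum /= (bigID c) /= [X in _ * X]big1 ?mulr1 => [|v cv]; last first.
    by rewrite extend_out // /cat_amp (negbTE cv).
  by rewrite (eq_bigr (fun _ => (sqrtC 2)^-1)) => [|v ->]; rewrite ?prodr_const ?card_sig.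
have -> : [forall v, (v \notin enum 'I_n) ==> ~~ extend a v] by apply/forallP => v; rewrite mem_enum.
by rewrite mulr1 prodrXr phase_exponentE.
Qed.

End Network.

Theorem theorem3 :
  exists A : algorithm,
    valid_algorithm A /\
    forall (n : nat) (e : rel 'I_n) (id : 'I_n -> nat) (c : 'I_n -> bool),
      symmetric e -> irreflexive e -> injective id ->
      forall x y : Basis (selected c),
        @output_state A 2 n e id c x y =
        density (graph_state (@induced_rel n e c)) x y.
Proof.
exists subgraph_state_alg; split; first exact: subgraph_state_alg_valid.
move=> n e id c e_sym e_irr id_inj x y.
by rewrite output_stateE // /density !amp_final_extend.
Qed.
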